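(* Let $G=(V,E)$ be a chain graph. An edge $e\in E$ is chain-safe (i.e., $G-e$ is a chain graph) if and only if $e$ is not the middle edge of an induced $P_4$ in $G$.
   Context: A chain graph is a bipartite graph whose vertex set can be partitioned into two independent sets $X,Y$ such that the neighborhoods of the vertices of $X$ are linearly ordered by inclusion. The middle edge of a path $P_4$ is the edge joining its two degree-2 vertices. *)

(* A finite simple graph is a symmetric irreflexive
   relation g : rel T on a finType T. *)
From mathcomp Require Import all_boot.
Set Implicit Arguments. Unset Strict Implicit. Unset Printing Implicit Defensive.

Section Graphs.
Variable T : finType.

Definition nbhd (g : rel T) (x : T) : {set T} := [set y | g x y].

Definition independent (g : rel T) (A : {set T}) : Prop :=
  forall x y, x \in A -> y \in A -> ~~ g x y.

Definition chain_graph (g : rel T) : Prop :=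
  exists X Y : {set T},
    [/\ X :&: Y = set0, X :|: Y = setT, independent g X, independent g Y &
        forall x1 x2, x1 \in X -> x2 \in X ->
          (nbhd g x1 \subset nbhd g x2) \/ (nbhd g x2 \subset nbhd g x1)].

Definition del_edge (g : rel T) (u v : T) : rel T :=
  fun x y => g x y && ~~ (((x == u) && (y == v)) || ((x == v) && (y == u))).

Definition induced_P4 (g : rel T) (a b c d : T) : Prop :=
  [/\ uniq [:: a; b; c; d],
      g a b && g b c && g c d &
      ~~ g a c && ~~ g b d && ~~ g a d].

Definition middle_edge_of_induced_P4 (g : rel T) (u v : T) : Prop :=
  exists a b c d, induced_P4 g a b c d /\
    ((b = u /\ c = v) \/ (b = v /\ c = u)).

End Graphs.

From mathcomp Require Import all_boot.

(* For a partition of V into independent sets X and Y, the neighbourhoods of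
   the vertices of X are nested exactly when there is no induced 2K2 (two edges with no edge between
   their endpoints).  Deleting uv keeps the bipartition, so G - uv is a chain
   graph iff it is 2K2-free.  An induced P4 a-u-v-d yields the induced 2K2
   {au, vd} of G - uv.  Conversely, an induced 2K2 of G - uv is not induced in
   G, so uv joins its two edges, and the four vertices span an induced P4 of G
   with middle edge uv. *)

Set Implicit Arguments.
Unset Strict Implicit.
Unset Printing Implicit Defensive.

Section TwoK2.
Variables (T : finType) (h : rel T).

Definition bipartition (X Y : {set T}) : Prop :=
  [/\ X :&: Y = set0, X :|: Y = setT, independent h X & independent h Y].

Definition bipartite : Prop := exists X Y, bipartition X Y.

Definition nested_nbhds (X : {set T}) : Prop :=
  forall x1 x2, x1 \in X -> x2 \in X ->
    (nbhd h x1 \subset nbhd h x2) \/ (nbhd h x2 \subset nbhd h x1).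

Definition induced_2K2 (a b c d : T) : bool :=
  [&& h a b, h c d, ~~ h a c, ~~ h a d, ~~ h b c & ~~ h b d].

Definition twoK2_free : Prop := forall a b c d, ~~ induced_2K2 a b c d.

Hypothesis h_sym : symmetric h.

Lemma induced_2K2_swapl a b c d : induced_2K2 a b c d = induced_2K2 b a c d.
Proof.
rewrite /induced_2K2 (h_sym b a).
by case: (h a c); case: (h a d); case: (h b c); case: (h b d); rewrite ?andbF.
Qed.

Lemma induced_2K2_swapr a b c d : induced_2K2 a b c d = induced_2K2 a b d c.
Proof.
rewrite /induced_2K2 (h_sym d c).
by case: (h a c); case: (h a d); case: (h b c); case: (h b d); rewrite ?andbF.
Qed.

Section Bipartition.
Variables X Y : {set T}.
Hypothesis bXY : bipartition X Y.

Lemma bipartition_memY x : (x \in Y) = (x \notin X).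
Proof.
case: bXY => XIY XUY _ _.
have : x \in X :|: Y by rewrite XUY inE.
have : x \notin X :&: Y by rewrite XIY inE.
by rewrite !inE; case: (x \in X); case: (x \in Y).
Qed.

Lemma bipartition_edge x y : h x y -> x \in X \/ y \in X.
Proof.
case: bXY => _ _ _ iY hxy.
case: (boolP (x \in X)) => [|xX]; first by left.
case: (boolP (y \in X)) => [|yX]; first by right.
by move: (iY x y); rewrite !bipartition_memY hxy => /(_ xX yX).
Qed.

Lemma bipartition_nbhd x y : x \in X -> h x y -> y \in Y.
Proof.
case: bXY => _ _ iX _ xX hxy; rewrite bipartition_memY.
by apply: contraL hxy => /(iX x y xX).
Qed.

Lemma nested_nbhds_2K2_free : nested_nbhds X -> twoK2_free.
Proof.
move=> nX.
suff K a b c d : induced_2K2 a b c d -> a \in X -> c \in X -> False.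
  move=> a b c d; apply/negP => abcd.
  have /and5P[hab hcd _ _ _] := abcd.
  case: (bipartition_edge hab) => [aX|bX];
    case: (bipartition_edge hcd) => [cX|dX].
  - exact: (K a b c d).
  - by apply: (K a b d c) aX dX; rewrite induced_2K2_swapr.
  - by apply: (K b a c d) bX cX; rewrite induced_2K2_swapl.
  - by apply: (K b a d c) bX dX; rewrite induced_2K2_swapl induced_2K2_swapr.
case/and5P=> hab hcd _ nad /andP[nbc _] aX cX.
case: (nX a c aX cX) => /subsetP sub.
- by move: (sub b); rewrite !inE hab h_sym (negbTE nbc) => /(_ isT).
- by move: (sub d); rewrite !inE hcd (negbTE nad) => /(_ isT).
Qed.

Lemma twoK2_free_nested_nbhds : twoK2_free -> nested_nbhds X.
Proof.
move=> free x1 x2 x1X x2X.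
case: (boolP (nbhd h x1 \subset nbhd h x2)) => [|/subsetPn[y1]]; first by left.
case: (boolP (nbhd h x2 \subset nbhd h x1)) => [|/subsetPn[y2]]; first by right.
rewrite !inE => h2 n1 h1 n2; exfalso.
have y1Y := bipartition_nbhd x1X h1; have y2Y := bipartition_nbhd x2X h2.
case: bXY => _ _ iX iY.
move/negP: (free x1 y1 x2 y2); apply.
by rewrite /induced_2K2 h1 h2 iX // n1 h_sym n2 iY.
Qed.

End Bipartition.

Lemma chain_graphE : chain_graph h <-> bipartite /\ twoK2_free.
Proof.
split=> [[X [Y [XIY XUY iX iY nX]]] | [[X [Y bXY]] free]].
  have bXY : bipartition X Y by split.
  by split; [exists X, Y | exact: nested_nbhds_2K2_free bXY nX].
have [XIY XUY iX iY] := bXY.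
by exists X, Y; split=> //; exact: twoK2_free_nested_nbhds bXY free.
Qed.

End TwoK2.

Section DelEdge.
Variables (T : finType) (g : rel T) (u v : T).

Lemma del_edge_sub x y : del_edge g u v x y -> g x y.
Proof. by case/andP. Qed.

Lemma del_edgeC : del_edge g u v =2 del_edge g v u.
Proof. by move=> x y; rewrite /del_edge orbC. Qed.

Lemma del_edge_sym : symmetric g -> symmetric (del_edge g u v).
Proof.
move=> g_sym x y; rewrite /del_edge g_sym.
by case: (x == u); case: (x == v); case: (y == u); case: (y == v).
Qed.

Lemma del_edge_idl x y : x != u -> x != v -> del_edge g u v x y = g x y.
Proof. by move=> /negbTE xu /negbTE xv; rewrite /del_edge xu xv andbT. Qed.

Lemma del_edge_idr x y : y != u -> y != v -> del_edge g u v x y = g x y.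
Proof.
by move=> /negbTE yu /negbTE yv; rewrite /del_edge yu yv !andbF andbT.
Qed.

Lemma del_edge_removed x y :
  g x y -> ~~ del_edge g u v x y -> (x = u /\ y = v) \/ (x = v /\ y = u).
Proof.
rewrite /del_edge => -> /=; rewrite negbK.
by case/orP => /andP[/eqP -> /eqP ->]; [left | right].
Qed.

Lemma induced_2K2_del_edgeC a b c d :
  induced_2K2 (del_edge g u v) a b c d = induced_2K2 (del_edge g v u) a b c d.
Proof. by rewrite /induced_2K2 !del_edgeC. Qed.

Lemma bipartition_del_edge X Y :
  bipartition g X Y -> bipartition (del_edge g u v) X Y.
Proof.
case=> XIY XUY iX iY; split=> // x y xX yX.
  by apply: contra (iX x y xX yX); apply: del_edge_sub.
by apply: contra (iY x y xX yX); apply: del_edge_sub.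
Qed.

End DelEdge.

Section MiddleEdge.
Variables (T : finType) (g : rel T).
Hypotheses (g_sym : symmetric g) (g_irr : irreflexive g).

Lemma induced_P4_del_edge a b c d :
  induced_P4 g a b c d -> induced_2K2 (del_edge g b c) a b c d.
Proof.
case; rewrite /= !inE !negb_or !andbT.
case/andP=> /and3P[ab ac ad] /andP[/andP[bc bd] cd].
case/andP=> /andP[gab _] gcd /andP[/andP[nac nbd] nad].
rewrite /induced_2K2 del_edge_idl // del_edge_idr 1?eq_sym //.
rewrite /del_edge !eqxx gab gcd (negbTE nac) (negbTE nad) (negbTE nbd) /=.
by rewrite !andbF.
Qed.

Lemma del_edge_2K2_P4 a b c d :
  g a c -> induced_2K2 (del_edge g a c) a b c d -> induced_P4 g b a c d.
Proof.
set h := del_edge g a c => gac abcd.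
have h_sym : symmetric h by apply: del_edge_sym.
have edge_neq x y : h x y -> x != y.
  by apply: contraTneq => ->; rewrite /h /del_edge g_irr.
have nbhd_neq x y z : h x y -> ~~ h x z -> y != z.
  by move=> hxy; apply: contraNneq => <-.
case/and5P: abcd => hab hcd nac nad /andP[nbc nbd].
have ba : b != a by rewrite eq_sym; apply: edge_neq hab.
have dc : d != c by rewrite eq_sym; apply: edge_neq hcd.
have ac : a != c by apply: contraTneq gac => ->; rewrite g_irr.
have bc := nbhd_neq _ _ _ hab nac; have bd := nbhd_neq _ _ _ hab nad.
have da : d != a by apply: nbhd_neq hcd _; rewrite h_sym.
split.
- by rewrite /= !inE !negb_or ba bc bd ac eq_sym da eq_sym dc.
- by rewrite g_sym (del_edge_sub hab) gac (del_edge_sub hcd).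
- rewrite -(del_edge_idl g c ba bc) -(del_edge_idl g d ba bc).
  by rewrite -(del_edge_idr g a da dc) nbc nad nbd.
Qed.

Lemma middle_edge_of_del_edge_2K2 (u v : T) a b c d :
  twoK2_free g -> induced_2K2 (del_edge g u v) a b c d ->
  middle_edge_of_induced_P4 g u v.
Proof.
set h := del_edge g u v => g_free.
have h_sym : symmetric h by apply: del_edge_sym.
suff K a' b' c' d' : induced_2K2 h a' b' c' d' -> g a' c' ->
    middle_edge_of_induced_P4 g u v.
  move=> abcd; case/and5P: (abcd) => hab hcd _ _ _.
  move: (g_free a b c d).
  rewrite /induced_2K2 (del_edge_sub hab) (del_edge_sub hcd) /= -!negb_or negbK.
  case/or4P=> [gac|gad|gbc|gbd].
  - exact: (K a b c d).
  - by apply: (K a b d c) gad; rewrite -(induced_2K2_swapr h_sym).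
  - by apply: (K b a c d) gbc; rewrite -(induced_2K2_swapl h_sym).
  - apply: (K b a d c) gbd.
    by rewrite -(induced_2K2_swapr h_sym) -(induced_2K2_swapl h_sym).
move=> abcd gac; have /and3P[_ _ /andP[nac _]] := abcd.
case: (del_edge_removed gac nac) => [[ea ec] | [ea ec]]; subst a' c'.
- by exists b', u, v, d'; split; [exact: del_edge_2K2_P4 | left].
- exists b', v, u, d'; split; last by right.
  by apply: del_edge_2K2_P4 => //; rewrite -induced_2K2_del_edgeC.
Qed.

End MiddleEdge.

Theorem lemma4p5 (T : finType) (g : rel T) (g_sym : symmetric g)
    (g_irr : irreflexive g) (hchain : chain_graph g) (u v : T) (huv : g u v) :
  chain_graph (del_edge g u v) <-> ~ middle_edge_of_induced_P4 g u v.
Proof.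
(* [huv] is unused: without the edge uv, G - uv = G and both sides hold. *)
have [[X [Y bXY]] g_free] := (chain_graphE g_sym).1 hchain.
apply: iff_trans (chain_graphE (del_edge_sym u v g_sym)) _.
split=> [[_ free] [a [b [c [d [abcd bc]]]]] | no_middle].
- apply: (negP (free a b c d)).
  case: bc => [[<- <-] | [<- <-]]; last rewrite induced_2K2_del_edgeC;
    exact: induced_P4_del_edge.
- split; first by exists X, Y; apply: bipartition_del_edge.
  move=> a b c d; apply/negP => abcd; apply: no_middle.
  exact: middle_edge_of_del_edge_2K2 g_free abcd.
Qed.
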